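(* Under the setting of the following context, if $\mathbf{E}:=[e_k(x_j)]_{j,k=1}^n$ is nonsingular, then $$\mathcal{E}(\mathcal{S}_{\mathcal{X}})-\mathcal{E}(\mathcal{S}_T)\le 2K_\Omega\sqrt{1-\frac{1}{\lambda_{\max}\big(K[\mathcal{X}]^T(\mathbf{E}\mathbf{E}^* )^{-1}\big)}}.$$
   Context: $X$ is a metric space, $K$ a reproducing kernel on $X$ with RKHS $\mathcal{H}_K$ (so $f(x)=(f,K(x,\cdot))_{\mathcal{H}_K}$), $\Omega\subseteq X$ compact with $K$ continuous on $\Omega\times\Omega$, $\mu$ a finite positive Borel measure on $\Omega$, $K_\Omega:=\int_\Omega K(t,t)\,d\mu(t)$, and for a closed subspace $V$ of $\mathcal{H}_K$, $\mathcal{E}(V):=\int_\Omega\operatorname{dist}^2(K(t,\cdot),V)\,d\mu(t)$. $T$ is the positive compact operator on $\mathcal{H}_K$ given by $(Tf)(x)=\int_\Omega f(t)K(t,x)\,d\mu(t)$; $e_1,\dots,e_n$ are orthonormal eigenfunctions of $T$ for its $n$ largest eigenvalues, assumed positive; $\mathcal{S}_T=\operatorname{span}\{e_1,\dots,e_n\}$. $\mathcal{X}=\{x_1,\dots,x_n\}\subseteq X$ with $K[\mathcal{X}]=[K(x_j,x_k)]_{j,k=1}^n$ nonsingular, $\mathcal{S}_{\mathcal{X}}=\operatorname{span}\{K(x_j,\cdot)\}$. With $f_j:=\sum_{k=1}^n\overline{e_k(x_j)}e_k$ and $h_j:=K(x_j,\cdot)-f_j$, the matrix $\mathbf{B}:=[(h_k,h_j)_{\mathcal{H}_K}]_{j,k=1}^n$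 is assumed nonsingular. $\lambda_{\max}$ denotes the largest eigenvalue, $M^T$ the transpose, $M^*$ the conjugate transpose. *)

From HB Require Import structures.
From mathcomp Require Import all_boot all_order all_algebra.
From mathcomp Require Import all_classical all_reals all_analysis.
From mathcomp.real_closed Require Import complex.

Set Implicit Arguments.
Unset Strict Implicit.
Unset Printing Implicit Defensive.

Import Order.TTheory GRing.Theory Num.Theory.
Import numFieldNormedType.Exports.

Local Open Scope classical_set_scope.
Local Open Scope ring_scope.

Definition cR {R : rcfType} (r : R) : R[i] := Complex r 0.

Notation Borel X := (g_sigma_algebraType (@open X)).

Definition Cint {d} {T : measurableType d} {R : realType}
  (mu : {measure set T -> \bar R}) (D : set T) (g : T -> R[i]) : R[i] :=
  Complex (Rintegral mu D (fun t => complex.Re (g t))) (Rintegral mu D (fun t => complex.Im (g t))).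

Definition inner_product {R : rcfType} {H : lmodType R[i]} (ip : H -> H -> R[i]) : Prop :=
  [/\ forall (a : R[i]) (u v w : H), ip (a *: u + v) w = a * ip u w + ip v w,
      forall u v : H, ip u v = (ip v u)^*,
      forall u : H, 0 <= ip u u &
      forall u : H, ip u u = 0 -> u = 0].

Definition ipnorm {R : rcfType} {H : lmodType R[i]} (ip : H -> H -> R[i]) (v : H) : R :=
  Num.sqrt (complex.Re (ip v v)).

Definition ip_complete {R : rcfType} {H : lmodType R[i]} (ip : H -> H -> R[i]) : Prop :=
  forall u : nat -> H,
    (forall eps : R, 0 < eps -> exists N : nat, forall m n : nat,
        (N <= m)%N -> (N <= n)%N -> ipnorm ip (u m - u n) < eps) ->
    exists l : H, forall eps : R, 0 < eps -> exists N : nat, forall n : nat,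
        (N <= n)%N -> ipnorm ip (u n - l) < eps.

Definition dist_span {R : realType} {H : lmodType R[i]} (ip : H -> H -> R[i])
  (v : H) (n : nat) (u : 'I_n -> H) : R :=
  inf [set ipnorm ip (v - \sum_(i < n) c i *: u i) | c in [set: 'I_n -> R[i]]].

(* The RKHS H_K is modelled as an abstract Hilbert space H whose elements are
   functions on X via f(x) := (f, kf x), where kf x = K(x, .).  The kernel is
   K(x, y) = K(x, .)(y) = (K(x, .), K(y, .)). *)
Definition kern {R : rcfType} {X : Type} {H : lmodType R[i]} (ip : H -> H -> R[i])
  (kf : X -> H) (x y : X) : R[i] := ip (kf x) (kf y).

(* Elements of H are genuine functions on X: determined by their values. *)
Definition functions_on {R : rcfType} {X : Type} {H : lmodType R[i]}
  (ip : H -> H -> R[i]) (kf : X -> H) : Prop :=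
  forall f : H, (forall x : X, ip f (kf x) = 0) -> f = 0.

(* T f = z f, where (Tf)(x) = \int_Omega f(t) K(t,x) dmu(t). *)
Definition T_eigen {R : realType} {X : ptopologicalType} {H : lmodType R[i]}
  (ip : H -> H -> R[i]) (kf : X -> H) (mu : {measure set (Borel X) -> \bar R})
  (Om : set X) (f : H) (z : R[i]) : Prop :=
  forall x : X,
    Cint mu Om (fun t : Borel X => ip f (kf t) * kern ip kf t x) = z * ip f (kf x).

Definition Err {R : realType} {X : ptopologicalType} {H : lmodType R[i]}
  (ip : H -> H -> R[i]) (kf : X -> H) (mu : {measure set (Borel X) -> \bar R})
  (Om : set X) (n : nat) (u : 'I_n -> H) : R :=
  Rintegral mu Om (fun t : Borel X => (dist_span ip (kf t) u) ^+ 2).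

Definition K_Om {R : realType} {X : ptopologicalType} {H : lmodType R[i]}
  (ip : H -> H -> R[i]) (kf : X -> H) (mu : {measure set (Borel X) -> \bar R}) (Om : set X) : R :=
  Rintegral mu Om (fun t : Borel X => complex.Re (kern ip kf t t)).

Definition Kmx {R : rcfType} {X : Type} {H : lmodType R[i]} (ip : H -> H -> R[i])
  (kf : X -> H) (n : nat) (x : 'I_n -> X) : 'M[R[i]]_n :=
  \matrix_(j, k) kern ip kf (x j) (x k).

Definition Emx {R : rcfType} {X : Type} {H : lmodType R[i]} (ip : H -> H -> R[i])
  (kf : X -> H) (n : nat) (e : 'I_n -> H) (x : 'I_n -> X) : 'M[R[i]]_n :=
  \matrix_(j, k) ip (e k) (kf (x j)).

Definition adjmx {R : rcfType} {n : nat} (A : 'M[R[i]]_n) : 'M[R[i]]_n :=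
  (map_mx (fun z => z^*) A)^T.

Definition hvec {R : rcfType} {X : Type} {H : lmodType R[i]} (ip : H -> H -> R[i])
  (kf : X -> H) (n : nat) (e : 'I_n -> H) (x : 'I_n -> X) (j : 'I_n) : H :=
  kf (x j) - \sum_(k < n) (ip (e k) (kf (x j)))^* *: e k.

Definition Bmx {R : rcfType} {X : Type} {H : lmodType R[i]} (ip : H -> H -> R[i])
  (kf : X -> H) (n : nat) (e : 'I_n -> H) (x : 'I_n -> X) : 'M[R[i]]_n :=
  \matrix_(j, k) ip (hvec ip kf e x k) (hvec ip kf e x j).

(* lam is the largest eigenvalue of A (all eigenvalues lie below lam in the
   partial order of C, i.e. are real and <= lam). *)
Definition is_lambda_max {R : rcfType} {n : nat} (A : 'M[R[i]]_n) (lam : R) : Prop :=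
  eigenvalue A (cR lam) /\ forall z : R[i], eigenvalue A z -> z <= cR lam.

From HB Require Import structures.
From mathcomp Require Import all_boot all_order all_algebra.
From mathcomp Require Import all_classical all_reals all_analysis.
From mathcomp.real_closed Require Import complex.
From mathcomp Require Import ring lra.
Set Implicit Arguments.
Unset Strict Implicit.
Unset Printing Implicit Defensive.

Import Order.TTheory GRing.Theory Num.Theory.
Import numFieldNormedType.Exports.
Local Open Scope classical_set_scope.
Local Open Scope ring_scope.

(* Let P be the orthogonal projection onto S_T = span e.  After the change of
   basis given by E, the eigenvalue hypothesis says that the Gram matrix K[X]
   is dominated by lmax times the Gram matrix of S_T: every a in S_T is P w for
   some w in S_X with |w|^2 <= lmax |a|^2.  Taking for w the lift of
   P K(t,.) and approximating K(t,.) by w / lmax gives, for every t,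
     dist^2(K(t,.), S_X) <= dist^2(K(t,.), S_T) + 2 sqrt(1 - 1/lmax) K(t,t),
   and integrating over Omega yields the theorem. *)

Section HermitianForm.
Local Open Scope sesquilinear_scope.
Variable C : numClosedFieldType.

Lemma trmxC_mul m n p (A : 'M[C]_(m, n)) (B : 'M[C]_(n, p)) :
  (A *m B)^t* = B^t* *m A^t*.
Proof. by rewrite trmx_mul map_mxM. Qed.

Lemma trmxC_inv n (A : 'M[C]_n) : (invmx A)^t* = invmx (A^t*).
Proof. by rewrite trmx_inv map_invmx. Qed.

Lemma eigenvalue_trmx n (A : 'M[C]_n) z : eigenvalue A^T z = eigenvalue A z.
Proof.
rewrite !eigenvalue_root_char /char_poly -det_tr; congr (root (\det _) z).
by apply/matrixP=> i j; rewrite !mxE eq_sym.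
Qed.

Lemma eigenvalue_similar n (P A : 'M[C]_n) z : P \in unitmx ->
  eigenvalue (P *m A *m invmx P) z -> eigenvalue A z.
Proof.
move=> Pu; have := @eigenvalue_conjmx _ _ _ P A (stablemx_unit _ Pu).
by rewrite row_free_unit /conjmx pinvmxE // => /(_ Pu z).
Qed.

Lemma hermitian_form_le n (A : 'M[C]_n) (l : C) : A^t* = A ->
  (forall z, eigenvalue A z -> z <= l) ->
  forall a : 'rV_n, (a *m A *m a^t*) 0 0 <= l * (a *m a^t*) 0 0.
Proof.
move=> Ah Al a; set P := spectralmx A; set d := spectral_diag A.
have Pu : P \is unitarymx by apply: spectral_unitarymx.
have Punit : P \in unitmx by apply: spectral_unit.
have iP : invmx P = P^t* by apply: invmx_unitary.
have AP : A = invmx P *m diag_mx d *m P.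
  by apply/orthomx_spectralP/normalmxP; rewrite Ah.
have dl i : d 0 i <= l.
  apply: Al; apply/eigenvalueP; exists (row i P).
    rewrite AP rowE !mulmxA mulmxK //.
    by rewrite -[_ *m diag_mx d]rowE row_diag_mx -scalemxAl.
  apply/eqP => /(congr1 (mulmx^~ (invmx P))); rewrite -row_mul mulmxV // mul0mx.
  by move/matrixP => /(_ 0 i); rewrite !mxE eqxx /= => /eqP; rewrite oner_eq0.
set y := a *m P^t*.
have -> : a *m A *m a^t* = y *m diag_mx d *m y^t*.
  by rewrite AP /y trmxC_mul trmxCK iP !mulmxA.
have -> : a *m a^t* = y *m y^t*.
  by rewrite /y trmxC_mul trmxCK mulmxA -(mulmxA a) -iP mulVmx // mulmx1.
rewrite mul_mx_diag !mxE mulr_sumr; apply: ler_sum => i _; rewrite !mxE.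
by rewrite mulrAC [l * _]mulrC ler_wpM2l // ?mul_conjC_ge0 ?dl.
Qed.

Lemma form_le_lambda_max n (K E : 'M[C]_n) (l : C) :
  K^t* = K -> E \in unitmx ->
  (forall z, eigenvalue (K^T *m invmx (E *m E^t*)) z -> z <= l) ->
  forall c : 'rV_n,
    (c *m K *m c^t*) 0 0 <= l * (c *m map_mx Num.conj E *m (c *m map_mx Num.conj E)^t*) 0 0.
Proof.
move=> Kh Eu Kl c; set F := map_mx Num.conj E.
have Fu : F \in unitmx by rewrite map_unitmx.
have FE : F^t* = E^T by apply/matrixP=> i j; rewrite !mxE conjCK.
have ETu : E^T \in unitmx by rewrite unitmx_tr.
set N := invmx F *m K *m invmx E^T.
have Nh : N^t* = N.
  rewrite /N !trmxC_mul !trmxC_inv Kh FE mulmxA.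
  by congr (invmx _ *m _ *m _); apply/matrixP=> i j; rewrite !mxE.
have NA : N = E^T *m (K^T *m invmx (E *m E^t*))^T *m invmx E^T.
  have EtF : (E^t*)^T = F by apply/matrixP=> i j; rewrite !mxE.
  have FET : invmx F = E^T *m invmx (F *m E^T).
    by rewrite -{1}[E^T](mulKmx Fu) mulmxK // unitmx_mul Fu.
  by rewrite /N trmx_mul trmxK trmx_inv trmx_mul EtF FET !mulmxA.
have Nl z : eigenvalue N z -> z <= l.
  by rewrite NA => /(eigenvalue_similar ETu); rewrite eigenvalue_trmx; apply: Kl.
have -> : c *m K *m c^t* = c *m F *m N *m (c *m F)^t*.
  by rewrite /N trmxC_mul FE !mulmxA mulmxK // mulmxKV.
exact: hermitian_form_le.
Qed.

End HermitianForm.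

Lemma adjmxE (R : rcfType) n (A : 'M[R[i]]_n) : adjmx A = (A^t*)%sesqui.
Proof. by apply/matrixP => i j; rewrite !mxE. Qed.

Section ComplexReal.
Variable R : rcfType.
Implicit Types z w : R[i].

Lemma conjCc z : z^* = (z^*)%C.
Proof.
have [->|z0] := eqVneq z 0; first by rewrite conjC0 conjc0.
by apply: (mulfI z0); rewrite -normCK sqr_normc.
Qed.

Lemma Re_conjC z : complex.Re z^* = complex.Re z.
Proof. by rewrite conjCc; case: z. Qed.

Lemma Re_cRM (k : R) z : complex.Re (cR k * z) = k * complex.Re z.
Proof. by case: z => a b /=; rewrite !mul0r subr0. Qed.

Lemma conjC_cR (k : R) : (cR k)^* = cR k.
Proof. by rewrite conjCc /= oppr0. Qed.

Lemma Re_ge0 z : 0 <= z -> 0 <= complex.Re z.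
Proof. by case: z => a b; rewrite lecE /= => /andP[]. Qed.

Lemma cR_Re z : 0 <= z -> cR (complex.Re z) = z.
Proof. by case: z => a b; rewrite lecE /= => /andP[/eqP -> _]. Qed.

Lemma Re_mul_conjC z : complex.Re (z * z^*) = complex.Re z ^+ 2 + complex.Im z ^+ 2.
Proof. by rewrite conjCc; case: z => a b; simpc; rewrite /= !expr2. Qed.

Lemma sqr_Re_le_mul_conjC (z : R[i]) : complex.Re z ^+ 2 <= complex.Re (z * z^*).
Proof. by rewrite Re_mul_conjC lerDl sqr_ge0. Qed.

Lemma sqr_Im_le_mul_conjC (z : R[i]) : complex.Im z ^+ 2 <= complex.Re (z * z^*).
Proof. by rewrite Re_mul_conjC lerDr sqr_ge0. Qed.

End ComplexReal.

Section InnerProduct.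
Variables (R : rcfType) (H : lmodType R[i]) (ip : H -> H -> R[i]).
Hypothesis ipP : inner_product ip.
Local Notation sqnorm u := (complex.Re (ip u u)).

Lemma ipDl u v w : ip (u + v) w = ip u w + ip v w.
Proof. by case: ipP => ipl _ _ _; rewrite -{1}[u]scale1r ipl mul1r. Qed.

Lemma ip0l w : ip 0 w = 0.
Proof. by apply: (@addrI _ (ip 0 w)); rewrite -ipDl !addr0. Qed.

Lemma ipZl a u w : ip (a *: u) w = a * ip u w.
Proof. by case: ipP => ipl _ _ _; rewrite -[a *: u]addr0 ipl ip0l addr0. Qed.

Lemma ipNl u w : ip (- u) w = - ip u w.
Proof. by rewrite -scaleN1r ipZl mulN1r. Qed.

Lemma ipBl u v w : ip (u - v) w = ip u w - ip v w.
Proof. by rewrite ipDl ipNl. Qed.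

Lemma ipC u v : ip u v = (ip v u)^*.
Proof. by case: ipP. Qed.

Lemma ipDr u v w : ip u (v + w) = ip u v + ip u w.
Proof. by rewrite [LHS]ipC ipDl rmorphD [ip u v]ipC [ip u w]ipC. Qed.

Lemma ipZr u a v : ip u (a *: v) = a^* * ip u v.
Proof. by rewrite [LHS]ipC ipZl rmorphM [ip u v]ipC. Qed.

Lemma ip0r u : ip u 0 = 0.
Proof. by rewrite ipC ip0l conjC0. Qed.

Lemma ipBr u v w : ip u (v - w) = ip u v - ip u w.
Proof. by rewrite [LHS]ipC ipBl rmorphB [ip u v]ipC [ip u w]ipC. Qed.

Lemma ip_suml I (r : seq I) (P : pred I) (F : I -> H) w :
  ip (\sum_(i <- r | P i) F i) w = \sum_(i <- r | P i) ip (F i) w.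
Proof. exact: (big_morph (ip^~ w) (fun u v => ipDl u v w) (ip0l w)). Qed.

Lemma ip_sumr I (r : seq I) (P : pred I) (F : I -> H) w :
  ip w (\sum_(i <- r | P i) F i) = \sum_(i <- r | P i) ip w (F i).
Proof. exact: (big_morph (ip w) (ipDr w) (ip0r w)). Qed.

Lemma cR_sqnorm u : cR (sqnorm u) = ip u u.
Proof. by case: ipP => _ _ ge0 _; apply: cR_Re. Qed.

Lemma sqnorm_ge0 u : 0 <= sqnorm u.
Proof. by case: ipP => _ _ ge0 _; apply: Re_ge0. Qed.

Lemma sqnorm_eq0 u : sqnorm u = 0 -> u = 0.
Proof. by case: ipP => _ _ _ eq0 u0; apply: eq0; rewrite -cR_sqnorm u0. Qed.

Lemma sqnormD u v : sqnorm (u + v) = sqnorm u + sqnorm v + 2 * complex.Re (ip u v).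
Proof. by rewrite ipDl !ipDr !raddfD /= [ip v u]ipC Re_conjC; lra. Qed.

Lemma sqnormB u v : sqnorm (u - v) = sqnorm u + sqnorm v - 2 * complex.Re (ip u v).
Proof. by rewrite ipBl !ipBr !raddfB /= [ip v u]ipC Re_conjC; lra. Qed.

Lemma Re_ip_cRZ (k1 k2 : R) u v :
  complex.Re (ip (cR k1 *: u) (cR k2 *: v)) = k1 * k2 * complex.Re (ip u v).
Proof. by rewrite ipZl ipZr conjC_cR !Re_cRM mulrA. Qed.

Lemma sqnorm_cRZ (k : R) u : sqnorm (cR k *: u) = k ^+ 2 * sqnorm u.
Proof. by rewrite Re_ip_cRZ expr2. Qed.

Lemma sqnormD_orth u v : ip u v = 0 -> sqnorm (u + v) = sqnorm u + sqnorm v.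
Proof. by move=> uv; rewrite sqnormD uv mulr0 addr0. Qed.

Lemma Re_ip_le_mean (t : R) u v : 0 < t ->
  2 * complex.Re (ip u v) <= t * sqnorm u + t^-1 * sqnorm v.
Proof.
move=> t0; have := sqnorm_ge0 (cR t *: u - v).
rewrite sqnormB sqnorm_cRZ ipZl Re_cRM.
have {1}-> : sqnorm v = t * (t^-1 * sqnorm v) by rewrite mulVKf ?lt0r_neq0.
set b := t^-1 * _; nra.
Qed.

Variables (n : nat) (e : 'I_n -> H).
Hypothesis e_orthonormal : forall j k, ip (e j) (e k) = (j == k)%:R.

Lemma ip_comb_orthonormal (c : 'I_n -> R[i]) k : ip (\sum_j c j *: e j) (e k) = c k.
Proof.
rewrite ip_suml (bigD1 k) //= big1 ?addr0; first by rewrite ipZl e_orthonormal eqxx mulr1.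
by move=> j /negbTE jk; rewrite ipZl e_orthonormal jk mulr0.
Qed.

Lemma ip_orth_comb w (c : 'I_n -> R[i]) :
  (forall k, ip w (e k) = 0) -> ip w (\sum_j c j *: e j) = 0.
Proof. by move=> we; rewrite ip_sumr big1 // => j _; rewrite ipZr we mulr0. Qed.

Lemma sqnorm_comb_orthonormal (c : 'I_n -> R[i]) :
  sqnorm (\sum_j c j *: e j) = \sum_j complex.Re (c j * (c j)^*).
Proof.
rewrite ip_suml raddf_sum; apply: eq_bigr => j _.
by rewrite ipZl ipC ip_comb_orthonormal.
Qed.

Definition oproj v := \sum_k ip v (e k) *: e k.

Lemma ip_oproj_orth v k : ip (v - oproj v) (e k) = 0.
Proof. by rewrite ipBl ip_comb_orthonormal subrr. Qed.

Lemma sqnorm_oproj v : sqnorm v = sqnorm (v - oproj v) + sqnorm (oproj v).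
Proof.
by rewrite -sqnormD_orth ?subrK // {2}/oproj ip_orth_comb // => k; apply: ip_oproj_orth.
Qed.

Lemma sqnorm_oproj_le v (c : 'I_n -> R[i]) :
  sqnorm (v - oproj v) <= sqnorm (v - \sum_j c j *: e j).
Proof.
have -> : v - \sum_j c j *: e j = (v - oproj v) + \sum_j (ip v (e j) - c j) *: e j.
  by rewrite (eq_bigr _ (fun j _ => scalerBl _ _ _)) sumrB addrA subrK.
rewrite [X in _ <= X]sqnormD_orth ?lerDl ?sqnorm_ge0 //.
by apply: ip_orth_comb; exact: ip_oproj_orth.
Qed.

Lemma sqnorm_coord_le w k : complex.Re (ip w (e k) * (ip w (e k))^*) <= sqnorm w.
Proof.
rewrite sqnorm_oproj /oproj sqnorm_comb_orthonormal [X in _ + X](bigD1 k) //= addrCA lerDl.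
rewrite addr_ge0 ?sqnorm_ge0 ?sumr_ge0 // => j _.
by rewrite Re_mul_conjC addr_ge0 ?sqr_ge0.
Qed.

Lemma sqnorm_shrink_orth (l : R) u q : ip u q = 0 -> 0 < sqnorm u ->
  sqnorm (u + q) <= l * sqnorm u ->
  1 <= l /\ sqnorm (cR (1 - l^-1) *: u + cR (- l^-1) *: q) <= (1 - l^-1) * sqnorm u.
Proof.
move=> uq u0; rewrite sqnormD_orth // => ql.
have l1 : 1 <= l by rewrite -(ler_pM2r u0) mul1r; apply: le_trans ql; rewrite lerDl sqnorm_ge0.
split=> //; have l0 : 0 < l := lt_le_trans ltr01 l1.
rewrite sqnormD !sqnorm_cRZ Re_ip_cRZ uq mulr0 mulr0 addr0 sqrrN.
have : l^-1 ^+ 2 * sqnorm q <= l^-1 ^+ 2 * ((l - 1) * sqnorm u).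
  apply: ler_wpM2l; first by rewrite exprn_ge0 // invr_ge0 ltW.
  by rewrite mulrBl mul1r; lra.
have -> : l^-1 ^+ 2 * ((l - 1) * sqnorm u) = (l^-1 - l^-1 ^+ 2) * sqnorm u.
  by field; rewrite lt0r_neq0.
nra.
Qed.

Definition proj_lift_bound (g : 'I_n -> H) (l : R) :=
  forall a : 'I_n -> R[i], exists c : 'I_n -> R[i],
    (forall k, ip (\sum_j c j *: g j) (e k) = a k) /\
    sqnorm (\sum_j c j *: g j) <= l * sqnorm (\sum_k a k *: e k).

Lemma sqnorm_lift_approx g l v : proj_lift_bound g l -> exists c : 'I_n -> R[i],
  sqnorm (v - \sum_j c j *: g j) <= sqnorm (v - oproj v) + 2 * Num.sqrt (1 - l^-1) * sqnorm v.
Proof.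
move=> /(_ (fun k => ip v (e k))) [c [cq cl]]; set w := \sum_j c j *: g j in cq cl *.
set u := oproj v; set r := v - u; set q := w - u.
have qe k : ip q (e k) = 0 by rewrite ipBl cq ip_comb_orthonormal subrr.
have uq : ip u q = 0 by rewrite ipC ip_orth_comb // conjC0.
have vE : sqnorm v = sqnorm r + sqnorm u := sqnorm_oproj v.
set s := Num.sqrt (1 - l^-1); have s0 : 0 <= s := sqrtr_ge0 _.
have r0 := sqnorm_ge0 r.
have [u0|u0] := leP (sqnorm u) 0.
  exists (fun _ => 0); rewrite big1 ?subr0 => [|j _]; last by rewrite scale0r.
  by have := mulr_ge0 s0 (sqnorm_ge0 v); lra.
have wE : w = u + q by rewrite addrC subrK.
rewrite wE in cl; have [l1 zl] := sqnorm_shrink_orth uq u0 cl.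
set z := cR (1 - l^-1) *: u + cR (- l^-1) *: q in zl.
have s2 : s ^+ 2 = 1 - l^-1 by rewrite sqr_sqrtr // subr_ge0 invf_le1 // (lt_le_trans ltr01 l1).
have s1 : s <= 1.
  have : 0 <= l^-1 by rewrite invr_ge0 (le_trans ler01 l1).
  nra.
(* The approximant is w / l. *)
exists (fun j => cR l^-1 * c j).
have -> : v - \sum_j (cR l^-1 * c j) *: g j = r + z.
  rewrite (eq_bigr _ (fun j _ => esym (scalerA _ _ _))) -scaler_sumr -/w wE /z /r.
  have -> : cR (1 - l^-1) = 1 - cR l^-1 by rewrite /cR; simpc.
  have -> : cR (- l^-1) = - cR l^-1 by rewrite /cR; simpc.
  by rewrite scalerBl scale1r scaleNr scalerDr opprD !addrA subrK.
rewrite sqnormD.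
have cross : 2 * complex.Re (ip r z) <= s * sqnorm r + s * sqnorm u.
  have [s_eq|s_pos] := eqVneq s 0.
    have /sqnorm_eq0 -> : sqnorm z = 0.
      by apply/le_anti; rewrite sqnorm_ge0 andbT (le_trans zl) // -s2 s_eq expr0n mul0r.
    by rewrite ip0r mulr0 s_eq !mul0r addr0.
  have sp : 0 < s by rewrite lt_def s_pos s0.
  apply: le_trans (Re_ip_le_mean r z sp) _; rewrite lerD2l.
  have -> : s * sqnorm u = s^-1 * (s ^+ 2 * sqnorm u) by field.
  by apply: ler_wpM2l; rewrite ?invr_ge0 ?s2.
have : s ^+ 2 * sqnorm u <= s * sqnorm u by have := mulr_ge0 s0 (ltW u0); nra.
have := mulr_ge0 s0 r0; rewrite -s2 in zl; rewrite vE; nra.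
Qed.

Lemma proj_lift_bound_gram (g : 'I_n -> H) (l : R) :
  let G := \matrix_(j, k) ip (g j) (g k) in let E := \matrix_(j, k) ip (e k) (g j) in
  E \in unitmx -> (forall z, eigenvalue (G^T *m invmx (E *m (E^t*)%sesqui)) z -> z <= cR l) ->
  proj_lift_bound g l.
Proof.
move=> G E Eu Gl a; set F := map_mx Num.conj E.
have Fu : F \in unitmx by rewrite map_unitmx.
set c := \row_k a k *m invmx F; exists (c 0); split.
  move=> k; have <- : (c *m F) 0 k = a k by rewrite mulmxKV // mxE.
  rewrite mxE ip_suml; apply: eq_bigr => j _.
  by rewrite ipZl !mxE [ip (g j) _]ipC.
have Gh : (G^t*)%sesqui = G by apply/matrixP => i j; rewrite !mxE [RHS]ipC.
have := form_le_lambda_max Gh Eu Gl c.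
have <- : ip (\sum_j c 0 j *: g j) (\sum_j c 0 j *: g j) = (c *m G *m (c^t*)%sesqui) 0 0.
  rewrite !mxE ip_suml; under eq_bigr do rewrite ipZl ip_sumr mulr_sumr.
  rewrite exchange_big; apply: eq_bigr => i _; rewrite !mxE mulr_suml.
  by apply: eq_bigr => j _; rewrite ipZr !mxE [_^* * _]mulrC mulrA.
have <- : ip (\sum_k a k *: e k) (\sum_k a k *: e k) = (c *m F *m ((c *m F)^t*)%sesqui) 0 0.
  rewrite mulmxKV // !mxE ip_suml; apply: eq_bigr => j _.
  by rewrite ipZl ipC ip_comb_orthonormal !mxE.
rewrite -(cR_sqnorm (\sum_j c 0 j *: g j)) -(cR_sqnorm (\sum_k a k *: e k)).
by rewrite -(rmorphM (real_complex R)) lecE /= eqxx.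
Qed.

End InnerProduct.


Lemma cvg_sqr_dominated (R : realType) (T : topologicalType) (h G : T -> R) (t : T) :
  G @ t --> 0 -> (\forall s \near t, (h s - h t) ^+ 2 <= G s) -> h @ t --> h t.
Proof.
move=> G0 hG; apply/cvgrPdist_lt => eps eps0.
have /cvgrPdist_lt /(_ (eps ^+ 2) (exprn_gt0 2 eps0)) := G0.
apply: filterS2 hG => s hs; rewrite sub0r normrN => Gs.
have : (h s - h t) ^+ 2 < eps ^+ 2 := le_lt_trans hs (le_lt_trans (ler_norm _) Gs).
by rewrite ltr_norml => ?; apply/andP; split; nra.
Qed.

Section KernelContinuity.
Variables (R : realType) (X : topologicalType) (Om : set X) (k : X * X -> R).
Hypothesis kc : {within Om `*` Om, continuous k}.

Lemma continuous_at_kernel_comp (g1 g2 : subspace Om -> subspace Om) t : Om t ->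
  {for t, continuous g1} -> {for t, continuous g2} -> g1 t = t -> g2 t = t ->
  {for t, continuous (fun s => k (g1 s, g2 s))}.
Proof.
move=> Ot g1c g2c g1t g2t.
have kt : {for (g1 t, g2 t), continuous (k : subspace Om * subspace Om -> R)}.
  rewrite g1t g2t; have := (continuous_subspace_prodP Om Om k).2 kc.
  by apply; apply: mem_set.
exact: (continuous_comp (cvg_pair g1c g2c) kt).
Qed.

Lemma continuous_kernel_diag : {within Om, continuous (fun t => k (t, t))}.
Proof.
rewrite continuous_subspace_in => t /set_mem Ot.
exact: (continuous_at_kernel_comp Ot (@cvg_id _ _) (@cvg_id _ _)).
Qed.

Lemma cvg_kernel_dist t : Om t ->
  (fun s => k (s, s) + k (t, t) - 2 * k (s, t)) @ (t : subspace Om) --> 0.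
Proof.
move=> Ot; have kd : {for t, continuous (fun s : subspace Om => k (s, s))}.
  exact: continuous_kernel_diag.
have ks : {for t, continuous (fun s : subspace Om => k (s, t))}.
  exact: (continuous_at_kernel_comp Ot (@cvg_id _ _) (cvg_cst _)).
have -> : 0 = k (t, t) + k (t, t) - 2 * k (t, t) by ring.
by apply: cvgB; [apply: cvgD kd (cvg_cst _) | apply: cvgM (cvg_cst _) ks].
Qed.

End KernelContinuity.

Section DistSpan.
Variables (R : realType) (H : lmodType R[i]) (ip : H -> H -> R[i]).
Hypothesis ipP : inner_product ip.
Local Notation sqnorm u := (complex.Re (ip u u)).

Lemma dist_span_ge0 v n (g : 'I_n -> H) : 0 <= dist_span ip v g.
Proof.
apply: lb_le_inf; first by exists (ipnorm ip (v - \sum_i 0 *: g i)), (fun _ => 0).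
by move=> _ [c _ <-]; apply: sqrtr_ge0.
Qed.

Lemma dist_span_le v n (g : 'I_n -> H) (c : 'I_n -> R[i]) :
  dist_span ip v g <= ipnorm ip (v - \sum_i c i *: g i).
Proof.
apply: ge_inf; last by exists c.
by exists 0 => _ [c' _ <-]; apply: sqrtr_ge0.
Qed.

Lemma dist_span_sqr_le v n (g : 'I_n -> H) (c : 'I_n -> R[i]) :
  dist_span ip v g ^+ 2 <= sqnorm (v - \sum_i c i *: g i).
Proof.
rewrite -[X in _ <= X](sqr_sqrtr (sqnorm_ge0 ipP _)).
by rewrite ler_pXn2r ?nnegrE ?dist_span_ge0 ?sqrtr_ge0 ?dist_span_le.
Qed.

Variables (n : nat) (e : 'I_n -> H).
Hypothesis e_orthonormal : forall j k, ip (e j) (e k) = (j == k)%:R.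

Lemma dist_span_orthonormal v : dist_span ip v e ^+ 2 = sqnorm (v - oproj ip e v).
Proof.
suff -> : dist_span ip v e = ipnorm ip (v - oproj ip e v) by rewrite sqr_sqrtr ?sqnorm_ge0.
apply/le_anti; rewrite dist_span_le /=.
apply: lb_le_inf; first by exists (ipnorm ip (v - \sum_i 0 *: e i)), (fun _ => 0).
by move=> _ [c _ <-]; rewrite ler_sqrt ?sqnorm_ge0 ?(sqnorm_oproj_le ipP e_orthonormal).
Qed.

Lemma dist_span_orthonormalE v : dist_span ip v e ^+ 2 =
  sqnorm v - \sum_k (complex.Re (ip v (e k)) ^+ 2 + complex.Im (ip v (e k)) ^+ 2).
Proof.
rewrite dist_span_orthonormal [in RHS](sqnorm_oproj ipP e_orthonormal v).
rewrite {3}/oproj sqnorm_comb_orthonormal //.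
by rewrite [X in _ + X - _](eq_bigr _ (fun j _ => Re_mul_conjC _)) /oproj addrK.
Qed.

Lemma dist_span_lift_le v (g : 'I_n -> H) (l : R) : proj_lift_bound ip e g l ->
  dist_span ip v g ^+ 2 <= dist_span ip v e ^+ 2 + 2 * Num.sqrt (1 - l^-1) * sqnorm v.
Proof.
move=> /(sqnorm_lift_approx ipP e_orthonormal v) [c cle].
by rewrite dist_span_orthonormal (le_trans (dist_span_sqr_le v g c)).
Qed.

End DistSpan.

Section ReproducingKernel.
Variables (R : realType) (X : topologicalType) (H : lmodType R[i]) (ip : H -> H -> R[i]).
Variables (kf : X -> H) (Om : set X).
Hypothesis ipP : inner_product ip.
Hypothesis kc : {within Om `*` Om, continuous (fun p => complex.Re (kern ip kf p.1 p.2))}.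
Variables (n : nat) (e : 'I_n -> H).
Hypothesis e_orthonormal : forall j k, ip (e j) (e k) = (j == k)%:R.

Lemma near_subspace (t : X) : Om t -> \forall s \near (t : subspace Om), Om s.
Proof.
move=> Ot; rewrite /prop_near1.
by apply: (eq_ind _ (fun F : set_system X => F Om) _ _ (nbhs_subspace_in Ot)); apply: withinT.
Qed.

Lemma continuous_coord (f : R[i] -> R) k :
  (forall z w, (f z - f w) ^+ 2 <= complex.Re ((z - w) * (z - w)^*)) ->
  {within Om, continuous (fun t => f (ip (kf t) (e k)))}.
Proof.
move=> fle; rewrite continuous_subspace_in => t /set_mem Ot.
apply: (cvg_sqr_dominated (cvg_kernel_dist kc Ot)).
apply: filterS (near_subspace Ot) => s _; apply: le_trans (fle _ _) _.
by rewrite -(ipBl ipP) (le_trans (sqnorm_coord_le ipP e_orthonormal _ k)) // sqnormB.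
Qed.

Lemma continuous_dist_span_orthonormal :
  {within Om, continuous (fun t => dist_span ip (kf t) e ^+ 2)}.
Proof.
have -> : (fun t => dist_span ip (kf t) e ^+ 2) = fun t => complex.Re (kern ip kf t t) -
    \sum_k (complex.Re (ip (kf t) (e k)) ^+ 2 + complex.Im (ip (kf t) (e k)) ^+ 2).
  by apply/funext => t; rewrite (dist_span_orthonormalE ipP e_orthonormal).
have cRe k : {within Om, continuous (fun t => complex.Re (ip (kf t) (e k)))}.
  by apply: continuous_coord => z w; rewrite -raddfB sqr_Re_le_mul_conjC.
have cIm k : {within Om, continuous (fun t => complex.Im (ip (kf t) (e k)))}.
  by apply: continuous_coord => z w; rewrite -raddfB sqr_Im_le_mul_conjC.
move=> t; apply: continuousB; first exact: (continuous_kernel_diag kc).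
move: t; apply: (@continuous_big R _ +%R 0 xpredT add_continuous) => k _ t.
by apply: cvgD; apply: cvgM; [exact: cRe | exact: cRe | exact: cIm | exact: cIm].
Qed.

End ReproducingKernel.

Section BorelIntegral.
Variables (R : realType) (X : ptopologicalType).

Lemma closed_Borel_measurable (A : set X) : closed A -> measurable (A : set (Borel X)).
Proof.
move=> cA; rewrite -[A]setCK; apply: measurableC; apply: sub_sigma_algebra.
exact: closed_openC.
Qed.

Lemma continuous_Borel_measurable (A : set X) (f : X -> R) :
  closed A -> {within A, continuous f} -> measurable_fun (A : set (Borel X)) f.
Proof.
move=> cA fc.
apply: (@measurability _ _ _ _ _ _ (measurable_realfun.RGenOInfty.G (R := R))).
  exact: measurable_realfun.RGenOInfty.measurableE.
move=> _ [_ [x ->] <-].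
have /continuousP /(_ _ (rray_open x)) /open_subspaceP [V oV VA] := fc.
rewrite setIC -VA setIC; apply: measurableI; first exact: closed_Borel_measurable.
exact: sub_sigma_algebra.
Qed.

Lemma continuous_compact_Borel_integrable (mu : {finite_measure set (Borel X) -> \bar R})
  (A : set X) (f : X -> R) : hausdorff_space X -> compact A ->
  {within A, continuous f} -> mu.-integrable (A : set (Borel X)) (EFin \o f).
Proof.
move=> hX cA fc; have clA := compact_closed hX cA.
have mA := closed_Borel_measurable clA.
have Afin : (mu A < +oo)%E by rewrite ltey_eq fin_num_measure.
have fb : [bounded f y | y in A].
  have : [bounded y | y in f @` A] := compact_bounded (continuous_compact fc cA).
  by rewrite /bounded_near; apply: filterS => M /= fM y Ay; apply: fM; exists y.
exact: (measurable_bounded_integrable mA Afin (continuous_Borel_measurable clA fc) fb).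
Qed.

End BorelIntegral.

Section IntegralNonmeasurable.
Context d (T : measurableType d) (R : realType) (mu : {measure set T -> \bar R}).

(* No measurability is required: the integral of a nonnegative function is the
   supremum over its simple minorants.  The integrand of E(S_X) is not known to
   be measurable. *)
Lemma ge0_le_integral_sup (D : set T) (f1 f2 : T -> \bar R) :
  (forall x, D x -> (0 <= f1 x)%E) -> (forall x, D x -> (f1 x <= f2 x)%E) ->
  (\int[mu]_(x in D) f1 x <= \int[mu]_(x in D) f2 x)%E.
Proof.
move=> f10 f12; have f20 x : D x -> (0 <= f2 x)%E.
  by move=> Dx; apply: le_trans (f10 _ Dx) (f12 _ Dx).
rewrite !ge0_integralE //; apply: ereal_sup_le => _ [h hf1 <-]; exists h => //= x.
apply: le_trans (hf1 x) _; rewrite /patch; case: ifP => // /set_mem; exact: f12.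
Qed.

Lemma Rintegral_le_integrable (D : set T) (a f : T -> R) : measurable D ->
  mu.-integrable D (EFin \o f) -> (forall t, D t -> 0 <= a t) -> (forall t, D t -> a t <= f t) ->
  Rintegral mu D a <= Rintegral mu D f.
Proof.
move=> mD fi a0 af; have ffin := integrable_fin_num mD fi.
have af_int : (\int[mu]_(x in D) (a x)%:E <= \int[mu]_(x in D) (f x)%:E)%E.
  by apply: ge0_le_integral_sup => t Dt; rewrite lee_fin ?a0 ?af.
rewrite /Rintegral fine_le // ge0_fin_numE ?(le_lt_trans af_int) //.
  by move/fin_numPlt: ffin => /andP[].
by apply: integral_ge0 => t Dt; rewrite lee_fin a0.
Qed.

End IntegralNonmeasurable.

Theorem theorem4p3 (R : realType) (X : pseudoPMetricType R)
  (H : lmodType R[i]) (ip : H -> H -> R[i]) (kf : X -> H)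
  (Om : set X) (mu : {finite_measure set (Borel X) -> \bar R})
  (n : nat) (lam : 'I_n -> R) (e : 'I_n -> H) (x : 'I_n -> X) (lmax : R) :
  hausdorff_space X ->
  inner_product ip -> ip_complete ip -> functions_on ip kf ->
  compact Om ->
  {within Om `*` Om, continuous (fun p : X * X => complex.Re (kern ip kf p.1 p.2))} ->
  {within Om `*` Om, continuous (fun p : X * X => complex.Im (kern ip kf p.1 p.2))} ->
  (forall j k : 'I_n, ip (e j) (e k) = (j == k)%:R) ->
  (forall k : 'I_n, 0 < lam k) ->
  (forall k : 'I_n, T_eigen ip kf mu Om (e k) (cR (lam k))) ->
  (forall (f : H) (z : R[i]), f != 0 -> (forall k : 'I_n, ip f (e k) = 0) ->
     T_eigen ip kf mu Om f z -> forall k : 'I_n, z <= cR (lam k)) ->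
  Kmx ip kf x \in unitmx ->
  Bmx ip kf e x \in unitmx ->
  Emx ip kf e x \in unitmx ->
  is_lambda_max ((Kmx ip kf x)^T *m invmx (Emx ip kf e x *m adjmx (Emx ip kf e x))) lmax ->
  Err ip kf mu Om (fun j => kf (x j)) - Err ip kf mu Om e
    <= 2 * K_Om ip kf mu Om * Num.sqrt (1 - 1 / lmax).
Proof.
move=> hX ipP _ _ Omc kc _ eON _ _ _ _ _ Eu [_ Kl].
have lift : proj_lift_bound ip e (fun j => kf (x j)) lmax.
  have KG : Kmx ip kf x = \matrix_(j, k) ip (kf (x j)) (kf (x k)).
    by apply/matrixP => j k; rewrite !mxE.
  have EC : Emx ip kf e x = \matrix_(j, k) ip (e k) (kf (x j)).
    by apply/matrixP => j k; rewrite !mxE.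
  rewrite KG EC adjmxE in Kl Eu.
  exact: (proj_lift_bound_gram ipP eON Eu Kl).
set s := Num.sqrt (1 - 1 / lmax).
have pw t : dist_span ip (kf t) (fun j => kf (x j)) ^+ 2 <=
    dist_span ip (kf t) e ^+ 2 + 2 * s * complex.Re (kern ip kf t t).
  by rewrite /s div1r; exact: dist_span_lift_le.
have mOm := closed_Borel_measurable (compact_closed hX Omc).
have ie : mu.-integrable Om (EFin \o fun t => dist_span ip (kf t) e ^+ 2).
  exact: continuous_compact_Borel_integrable hX Omc (continuous_dist_span_orthonormal ipP kc eON).
have ik : mu.-integrable Om (EFin \o fun t => complex.Re (kern ip kf t t)).
  exact: continuous_compact_Borel_integrable hX Omc (continuous_kernel_diag kc).
have iZ := integrableZl mOm (2 * s) ik.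
have := Rintegral_le_integrable mOm (integrableD mOm ie iZ) (fun t _ => sqr_ge0 _) (fun t _ => pw t).
rewrite RintegralD // RintegralZl // /Err /K_Om; lra.
Qed.
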